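(* Let $k,d,b,\tilde b\ge0$ be measurable on $\mathbb{R}_+$ with $\int_0^{+\infty}k=\int_0^{+\infty}d=+\infty$ and $1<\int_0^{+\infty}\big(b(a)e^{-\int_0^ak}+\tilde b(a)e^{-\int_0^ad}\big)da<+\infty$. Let the competition functions be linear: $\eta(N_1,N_2)=\eta_1N_1+\eta_2N_2$, $c(N_1,N_2)=c_1N_1+c_2N_2$, $\tilde c(N_1,N_2)=\tilde c_1N_1+\tilde c_2N_2$ with nonnegative coefficients, and put $c_1^{tot}=\eta_1+c_1$, $c_2^{tot}=\eta_2+c_2$, $c_{tot}=c+\eta$. Assume $c_1^{tot}>0$, $\tilde c_2>0$ and $c_1^{tot}\ge c_2^{tot}$. Then every nonnegative solution $(N_1^*,N_2^* )$ of $$\int_0^{+\infty}\tilde b(a)e^{-\int_0^ad-\tilde c(N_1,N_2)a}da\cdot\int_0^{+\infty}\big(k(a)+\eta(N_1,N_2)\big)e^{-\int_0^ak-c_{tot}(N_1,N_2)a}da+\int_0^{+\infty}b(a)e^{-\int_0^ak-c_{tot}(N_1,N_2)a}da=1,$$ $$N_1\int_0^{+\infty}e^{-\int_0^ad-\tilde c(N_1,N_2)a}da\cdot\int_0^{+\infty}\big(k(a)+\eta(N_1,N_2)\big)e^{-\int_0^ak-c_{tot}(N_1,N_2)a}da-N_2\int_0^{+\infty}e^{-\int_0^ak-c_{tot}(N_1,N_2)a}da=0$$ satisfies $N_1^*+N_2^*\ge N^*$, where $N^*=\mu_0/c_1^{tot}$ if $\int_0^{+\infty}b(a)e^{-\int_0^ak}da>1$,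 with $\mu_0>0$ the unique solution of $\int_0^{+\infty}b(a)e^{-\int_0^ak(u)du-\mu_0a}da=1$, and $N^*=0$ otherwise.
   Context: $N^*$ is the total steady-state population of the one-phase model $\partial_tn+\partial_an=-(k(a)+c_{tot}(N(t),0))n$, $n(t,0)=\int bn$. *)

From HB Require Import structures.
From mathcomp Require Import all_boot all_order all_algebra.
From mathcomp Require Import all_classical all_reals all_analysis.
Set Implicit Arguments. Unset Strict Implicit. Unset Printing Implicit Defensive.
Import Order.TTheory GRing.Theory Num.Theory.
Local Open Scope classical_set_scope.
Local Open Scope ring_scope.
Local Open Scope ereal_scope.

Definition int0 (R : realType) (f : R -> \bar R) : \bar R :=
  \int[@lebesgue_measure R]_(a in `[0%R, +oo[) f a.

(* survival factor  e^{- int_0^a k(u) du}  (= 0 if the inner integral is +oo) *)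
Definition surv (R : realType) (k : R -> R) (a : R) : \bar R :=
  expeR (- \int[@lebesgue_measure R]_(u in `[0%R, a]) (k u)%:E).

Definition R0 (R : realType) (k b : R -> R) : \bar R :=
  int0 (fun a => (b a)%:E * surv k a).

Definition mu0_eq (R : realType) (k b : R -> R) (mu : R) : Prop :=
  int0 (fun a => (b a)%:E * surv k a * (expR (- (mu * a)))%:E) = 1.

Definition Nstar (R : realType) (k b : R -> R) (c1tot : R) : R :=
  if (1 < R0 k b) then (xget 0%R [set mu | (0 < mu)%R /\ mu0_eq k b mu] / c1tot)%R
  else 0%R.

(** Only the first equilibrium equation is needed: its first summand is
    nonnegative, so the one-phase renewal integral
    [∫ b(a) e^{-∫_0^a k} e^{-μ a} da] is at most 1 at [μ = c_tot(N1, N2)].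
    This integral is strictly decreasing in [μ] wherever it is finite and
    nonzero, and it equals 1 at [μ0]; hence [μ0 <= c_tot(N1, N2)], which is at
    most [c1tot (N1 + N2)] because [c2tot <= c1tot]. *)
From HB Require Import structures.
From mathcomp Require Import all_boot all_order all_algebra.
From mathcomp Require Import all_classical all_reals all_analysis.
From mathcomp Require Import measurable_realfun.
From mathcomp Require Import ring.
Import Order.TTheory GRing.Theory Num.Theory.
Local Open Scope classical_set_scope.
Local Open Scope ring_scope.
Local Open Scope ereal_scope.

Lemma integral_eq0_of_weighted d (T : measurableType d) (R : realType)
    (mu : {measure set T -> \bar R}) (D : set T) (g w : T -> R) :
  measurable D -> measurable_fun D g -> measurable_fun D w ->
  (forall x, D x -> (0 <= g x)%R) -> (forall x, D x -> (0 < w x)%R) ->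
  \int[mu]_(x in D) (g x * w x)%:E = 0 -> \int[mu]_(x in D) (g x)%:E = 0.
Proof.
move=> mD mg mw g0 w0 gw0.
have mEg : measurable_fun D (fun a => (g a)%:E) by exact/measurable_EFinP.
have mEgw : measurable_fun D (fun a => (g a * w a)%:E).
  by apply/measurable_EFinP; exact: measurable_funM.
have gw_ae0 : ae_eq mu D (EFin \o (g \* w)%R) (cst 0).
  apply/ae_eq_integral_abs => //; rewrite -gw0; apply: eq_integral => x.
  by rewrite inE => Dx; rewrite gee0_abs // lee_fin mulr_ge0 ?g0 // ltW ?w0.
rewrite (ae_eq_integral (cst 0)) ?integral0 //.
apply: filterS gw_ae0 => x gwx Dx; move/eqP: (gwx Dx); rewrite /= eqe mulf_eq0.
by case/orP=> [/eqP ->//|]; rewrite gt_eqF ?w0.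
Qed.

Definition laplace {R : realType} (f : R -> R) (mu : R) : \bar R :=
  int0 (fun a => (f a * expR (- (mu * a)))%:E).

Section LaplaceMonotone.
Variables (R : realType) (f : R -> R).
Hypothesis f_ge0 : forall a : R, (0 <= a)%R -> (0 <= f a)%R.
Hypothesis mf : measurable_fun (`[0%R, +oo[ : set R) f.

Let D : set R := `[0%R, +oo[.

Let D_ge0 a : D a -> (0 <= a)%R.
Proof. by rewrite /D /= in_itv /= andbT. Qed.

Let measurable_expR_lin (c : R) : measurable_fun D (fun a => expR (c * a)).
Proof.
apply: (measurableT_comp (f := expR)); first exact: measurable_expR.
exact: mulrl_measurable.
Qed.

Lemma laplace_lt (lam mu : R) : (lam < mu)%R ->
  laplace f mu \is a fin_num -> laplace f mu != 0 ->
  laplace f mu < laplace f lam.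
Proof.
move=> lam_mu fin_mu nz_mu.
pose g a := (f a * expR (- (mu * a)))%R.
pose w a := (expR ((mu - lam) * a) - 1)%R.
have mg : measurable_fun D g.
  apply: measurable_funM => //.
  by under eq_fun do rewrite -mulNr; exact: measurable_expR_lin.
have mw : measurable_fun D w.
  by apply: measurable_funB; [exact: measurable_expR_lin|exact: measurable_cst].
have g0 a : D a -> (0 <= g a)%R by move/D_ge0 => a0; rewrite mulr_ge0 ?f_ge0.
have w_gt0 a : (0 < a)%R -> (0 < w a)%R.
  by move=> a0; rewrite subr_gt0 -expR0 ltr_expR mulr_gt0 // subr_gt0.
have w0 a : D a -> (0 <= w a)%R.
  move/D_ge0; rewrite le0r => /orP[/eqP->|/w_gt0/ltW//].
  by rewrite /w mulr0 expR0 subrr.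
have gw_ge0 a : D a -> (0 <= g a * w a)%R by move=> Da; rewrite mulr_ge0 ?g0 ?w0.
have mEg : measurable_fun D (fun a => (g a)%:E) by exact/measurable_EFinP.
have mEgw : measurable_fun D (fun a => (g a * w a)%:E).
  by apply/measurable_EFinP; exact: measurable_funM.
have laplace_split :
    laplace f lam = laplace f mu + \int[lebesgue_measure]_(a in D) (g a * w a)%:E.
  rewrite /laplace /int0 -ge0_integralD //.
  apply: eq_integral => a _; rewrite -EFinD /g /w; congr EFin.
  have -> : expR (- (lam * a)) = (expR (- (mu * a)) * expR ((mu - lam) * a))%R.
    by rewrite -expRD; congr expR; ring.
  ring.
rewrite laplace_split lteDl // lt0e integral_ge0 ?andbT; last first.
  by move=> a /gw_ge0; rewrite lee_fin.
apply: contra nz_mu => /eqP gw0; apply/eqP.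
(* [w] vanishes at [0] only, so it is positive once this null point is removed. *)
have mD : measurable D by exact: measurable_itv.
have mD0 : measurable (D `\ 0%R) by apply: measurableD => //; exact: measurable_set1.
have sD0 : D `\ 0%R `<=` D by move=> a [].
have D0_gt0 a : (D `\ 0%R) a -> (0 < a)%R.
  by move=> [Da /eqP a0]; rewrite lt_def a0 D_ge0.
rewrite /laplace /int0 -/D -(integral_setD1 (r := 0%R)) //; last first.
  exact: (measurable_funS mD sD0 mEg).
apply: (@integral_eq0_of_weighted _ _ _ lebesgue_measure _ g w) => //.
- exact (measurable_funS mD sD0 mg).
- exact (measurable_funS mD sD0 mw).
- by move=> a /sD0; exact: g0.
- by move=> a /D0_gt0; exact: w_gt0.
by rewrite integral_setD1 //; exact: (measurable_funS mD sD0 mEgw).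
Qed.

End LaplaceMonotone.

Section Survival.
Variables (R : realType) (k : R -> R).
Hypothesis k_ge0 : forall a : R, (0 <= a)%R -> (0 <= k a)%R.
Hypothesis mk : measurable_fun (`[0%R, +oo[ : set R) k.

Let cumulative_ge0 a : 0 <= \int[@lebesgue_measure R]_(u in `[0%R, a]) (k u)%:E.
Proof.
apply: integral_ge0 => u /=; rewrite in_itv /= => /andP[u0 _].
by rewrite lee_fin k_ge0.
Qed.

Lemma survE a : surv k a = (fine (surv k a))%:E.
Proof. by rewrite /surv; move: (cumulative_ge0 a); case: (\int[_]_(_ in _) _). Qed.

Lemma surv_ge0 a : (0 <= fine (surv k a))%R.
Proof. by rewrite -lee_fin -survE /surv expeR_ge0. Qed.

Lemma surv_nonincreasing : {homo (fun a => fine (surv k a)) : x y /~ (y <= x)%R}.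
Proof.
move=> x y xy; rewrite -lee_fin -!survE /surv lee_expeR leeN2.
have [y0|y_lt0] := leP 0%R y.
- apply: ge0_subset_integral => //.
  + have sub : `[0%R, y] `<=` (`[0%R, +oo[ : set R).
      by move=> u /=; rewrite !in_itv /= => /andP[->].
    by apply: (measurable_funS _ sub); [exact: measurable_itv|exact/measurable_EFinP].
  + by move=> u /=; rewrite in_itv /= => /andP[u0 _]; rewrite lee_fin k_ge0.
  + by move=> u /=; rewrite !in_itv /= => /andP[-> uy]; rewrite (le_trans uy).
- rewrite integral0_eq // => u /=; rewrite in_itv /= => /andP[u0 ux].
  by have := le_lt_trans u0 (le_lt_trans (le_trans ux xy) y_lt0); rewrite ltxx.
Qed.

Lemma measurable_surv : measurable_fun (`[0%R, +oo[ : set R) (fun a => fine (surv k a)).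
Proof. by apply: nonincreasing_measurable => //; exact: surv_nonincreasing. Qed.

Lemma renewal_laplace (b : R -> R) (mu : R) :
  int0 (fun a => (b a)%:E * surv k a * (expR (- (mu * a)))%:E)
  = laplace (fun a => b a * fine (surv k a))%R mu.
Proof. by apply: eq_integral => a _; rewrite survE -!EFinM. Qed.

End Survival.

Lemma Nstar_le {R : realType} {k b : R -> R} {c mu : R} :
  (forall a : R, (0 <= a)%R -> (0 <= k a)%R) ->
  (forall a : R, (0 <= a)%R -> (0 <= b a)%R) ->
  measurable_fun (`[0%R, +oo[ : set R) k ->
  measurable_fun (`[0%R, +oo[ : set R) b ->
  (0 < c)%R -> (0 <= mu)%R ->
  int0 (fun a => (b a)%:E * surv k a * (expR (- (mu * a)))%:E) <= 1 ->
  (Nstar k b c <= mu / c)%R.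
Proof.
move=> k0 b0 mk mb c0 mu0 renewal_le1.
have mudiv_ge0 : (0 <= mu / c)%R by rewrite divr_ge0 // ltW.
rewrite /Nstar; case: ifP => // _.
case: xgetP => [m _ [m0 m_eq]|_]; last by rewrite mul0r.
rewrite ler_pM2r ?invr_gt0 // leNgt; apply/negP => mu_lt_m.
move: m_eq renewal_le1; rewrite /mu0_eq !renewal_laplace // => m_eq.
apply/negP; rewrite -ltNge -m_eq; apply: laplace_lt; rewrite ?m_eq //.
- by move=> a a0; rewrite mulr_ge0 ?b0 ?surv_ge0.
- by apply: measurable_funM => //; exact: measurable_surv.
Qed.

Theorem corollary1 (R : realType) (k d b bt : R -> R)
  (eta1 eta2 c1 c2 ct1 ct2 : R)
  (hk0 : forall a : R, (0 <= a)%R -> (0 <= k a)%R)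
  (hd0 : forall a : R, (0 <= a)%R -> (0 <= d a)%R)
  (hb0 : forall a : R, (0 <= a)%R -> (0 <= b a)%R)
  (hbt0 : forall a : R, (0 <= a)%R -> (0 <= bt a)%R)
  (hkm : measurable_fun (`[0%R, +oo[ : set R) k)
  (hdm : measurable_fun (`[0%R, +oo[ : set R) d)
  (hbm : measurable_fun (`[0%R, +oo[ : set R) b)
  (hbtm : measurable_fun (`[0%R, +oo[ : set R) bt)
  (hkinf : int0 (fun a => (k a)%:E) = +oo)
  (hdinf : int0 (fun a => (d a)%:E) = +oo)
  (hR1 : 1 < int0 (fun a => (b a)%:E * surv k a + (bt a)%:E * surv d a))
  (hR2 : int0 (fun a => (b a)%:E * surv k a + (bt a)%:E * surv d a) < +oo)
  (heta1 : (0 <= eta1)%R) (heta2 : (0 <= eta2)%R)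
  (hc1 : (0 <= c1)%R) (hc2 : (0 <= c2)%R)
  (hct1 : (0 <= ct1)%R) (hct2 : (0 <= ct2)%R)
  (hc1tot : (0 < eta1 + c1)%R) (hct2pos : (0 < ct2)%R)
  (hcomp : (eta2 + c2 <= eta1 + c1)%R)
  (N1 N2 : R) (hN1 : (0 <= N1)%R) (hN2 : (0 <= N2)%R) :
  let eta := (eta1 * N1 + eta2 * N2)%R in
  let ct := (ct1 * N1 + ct2 * N2)%R in
  let ctot := ((eta1 + c1) * N1 + (eta2 + c2) * N2)%R in
  let Ek := fun a => surv k a * (expR (- (ctot * a)))%:E in
  let Ed := fun a => surv d a * (expR (- (ct * a)))%:E in
  int0 (fun a => (bt a)%:E * Ed a) * int0 (fun a => (k a + eta)%:E * Ek a)
    + int0 (fun a => (b a)%:E * Ek a) = 1 ->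
  N1%:E * int0 Ed * int0 (fun a => (k a + eta)%:E * Ek a)
    - N2%:E * int0 Ek = 0 ->
  (Nstar k b (eta1 + c1) <= N1 + N2)%R.
Proof.
move=> eta ct ctot Ek Ed equilibrium _.
have Ek_ge0 a : 0 <= Ek a by rewrite mule_ge0 ?expeR_ge0 // lee_fin expR_ge0.
have Ed_ge0 a : 0 <= Ed a by rewrite mule_ge0 ?expeR_ge0 // lee_fin expR_ge0.
have int0_ge0 (f : R -> \bar R) : (forall a, (0 <= a)%R -> 0 <= f a) -> 0 <= int0 f.
  by move=> f0; apply: integral_ge0 => a; rewrite /= in_itv /= andbT; exact: f0.
have renewal_le1 : int0 (fun a => (b a)%:E * surv k a * (expR (- (ctot * a)))%:E) <= 1.
  rewrite (_ : int0 _ = int0 (fun a => (b a)%:E * Ek a)); last first.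
    by apply: eq_integral => a _; rewrite muleA.
  rewrite -equilibrium.
  apply: leeDr; apply: mule_ge0; apply: int0_ge0 => a a0.
  - by rewrite mule_ge0 ?lee_fin ?hbt0.
  - by rewrite mule_ge0 // lee_fin addr_ge0 ?hk0 // addr_ge0 // mulr_ge0.
have ctot_ge0 : (0 <= ctot)%R by rewrite /ctot addr_ge0 // mulr_ge0 // addr_ge0.
apply: le_trans (Nstar_le hk0 hb0 hkm hbm hc1tot ctot_ge0 renewal_le1) _.
by rewrite ler_pdivrMr // mulrC mulrDr lerD2l ler_wpM2r.
Qed.
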